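(* Let $q>0$, let $S\subset\mathbb{H}^3$ be a sphere of hyperbolic radius $q$ centred at $p\in\mathbb{H}^3$, let $n\geq2$ and let $u_1,\dots,u_n\in T_p\mathbb{H}^3$ be unit vectors. Let $p_i$ be the intersection point of $S$ with $\mathrm{geod}(p,u_i)(\mathbb R_+)$. For each $i$ let $S_i\subset\mathbb{H}^3$ be the sphere of hyperbolic radius $q$ such that $S\cap S_i=\{p_i\}$, and let $\theta_{ij}$ be the angle between $u_i$ and $u_j$. If for all $i\neq j$ $$\theta_{ij}>2\arcsin\left(\frac{1}{2\cosh q}\right),$$ then $S_i\cap S_j=\emptyset$ for all $i\neq j$.
   Context: For $p\in\mathbb{H}^3$ and a unit vector $v\in T_p\mathbb{H}^3$, $\mathrm{geod}(p,v)$ denotes the unit-speed geodesic through $p$ with initial velocity $v$. *)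

(* hyperbolic 3-space in the hyperboloid model in R^{1,3}. *)
From Stdlib Require Import Reals.
Open Scope R_scope.

Record V4 := mkV4 { c0 : R; c1 : R; c2 : R; c3 : R }.

Definition mink (a b : V4) : R :=
  - c0 a * c0 b + c1 a * c1 b + c2 a * c2 b + c3 a * c3 b.

Definition in_H3 (x : V4) : Prop := mink x x = -1 /\ 0 < c0 x.

Definition arcosh (y : R) : R := ln (y + sqrt (y * y - 1)).

Definition hdist (x y : V4) : R := arcosh (- mink x y).

Definition tangent_at (p v : V4) : Prop := mink p v = 0.
Definition unit_vec (v : V4) : Prop := mink v v = 1.

Definition geod (p v : V4) (t : R) : V4 :=
  mkV4 (cosh t * c0 p + sinh t * c0 v) (cosh t * c1 p + sinh t * c1 v)
       (cosh t * c2 p + sinh t * c2 v) (cosh t * c3 p + sinh t * c3 v).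

Definition angle (u w : V4) : R :=
  acos (mink u w / (sqrt (mink u u) * sqrt (mink w w))).

Definition sphere (c : V4) (r : R) (x : V4) : Prop := in_H3 x /\ hdist c x = r.

From Stdlib Require Import Reals Lra Psatz.
Open Scope R_scope.

(* In the hyperboloid model the point p_i is geod(p,u_i)(q) and the sphere S_i
   tangent to S there is centred at c_i = geod(p,u_i)(2q).  To see this, write
   c_i = a p + w with w tangent at p: for every unit tangent v with <w,v> = <w,u_i>,
   geod(p,v)(q) is a common point of S and S_i, so taking v the reflection of u_i
   in the line of w forces w to be a nonzero multiple of u_i; the two coefficients
   are then fixed by <c_i,c_i> = -1 and <c_i,p_i> = -cosh q.
   Two spheres of radius q meet only if -<c_i,c_j> <= cosh 2q (triangle
   inequality), whereas -<c_i,c_j> = cosh^2 2q - sinh^2 2q cos theta_ij, and the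
   angle condition, i.e. cos theta_ij < 1 - 1/(2 cosh^2 q), makes this exceed
   cosh 2q. *)

Lemma cosh_add_sinh t : cosh t + sinh t = exp t.
Proof. unfold cosh, sinh; field. Qed.

Lemma cosh_sub_sinh t : cosh t - sinh t = exp (- t).
Proof. unfold cosh, sinh; field. Qed.

Lemma cosh_sq_sub_sinh_sq t : cosh t ^ 2 - sinh t ^ 2 = 1.
Proof.
  replace (cosh t ^ 2 - sinh t ^ 2) with ((cosh t + sinh t) * (cosh t - sinh t)) by ring.
  rewrite cosh_add_sinh, cosh_sub_sinh, <- exp_plus, Rplus_opp_r; apply exp_0.
Qed.

Lemma cosh_pos t : 0 < cosh t.
Proof. unfold cosh; pose proof (exp_pos t); pose proof (exp_pos (- t)); lra. Qed.

Lemma cosh_ge_1 t : 1 <= cosh t.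
Proof. pose proof (cosh_sq_sub_sinh_sq t); pose proof (cosh_pos t); nra. Qed.

Lemma sinh_pos t : 0 < t -> 0 < sinh t.
Proof. intros Ht; rewrite <- sinh_0; apply sinh_lt, Ht. Qed.

Lemma sinh_nonneg t : 0 <= t -> 0 <= sinh t.
Proof. intros [Ht | <-]; [left; apply sinh_pos | rewrite sinh_0; right]; auto. Qed.

Lemma cosh_double t : cosh (2 * t) = cosh t ^ 2 + sinh t ^ 2.
Proof.
  unfold cosh, sinh; replace (- (2 * t)) with (- t + - t) by ring.
  replace (2 * t) with (t + t) by ring; rewrite !exp_plus; field.
Qed.

Lemma sinh_double t : sinh (2 * t) = 2 * sinh t * cosh t.
Proof.
  unfold cosh, sinh; replace (- (2 * t)) with (- t + - t) by ring.
  replace (2 * t) with (t + t) by ring; rewrite !exp_plus; field.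
Qed.

Lemma arcosh_cosh t : 0 <= t -> arcosh (cosh t) = t.
Proof.
  intros Ht; unfold arcosh.
  replace (cosh t * cosh t - 1) with (sinh t * sinh t) by (pose proof (cosh_sq_sub_sinh_sq t); nra).
  rewrite sqrt_square by (apply sinh_nonneg; assumption).
  rewrite cosh_add_sinh; apply ln_exp.
Qed.

Lemma cosh_arcosh y : 1 <= y -> cosh (arcosh y) = y.
Proof.
  intros Hy; unfold arcosh.
  set (r := sqrt (y * y - 1)).
  assert (Hr : r * r = y * y - 1) by (apply sqrt_sqrt; nra).
  assert (Hr0 : 0 <= r) by apply sqrt_pos.
  assert (Hyr : 0 < y + r) by lra.
  unfold cosh; rewrite exp_Ropp, exp_ln by assumption.
  assert (Hinv : / (y + r) = y - r).
  { apply Rmult_eq_reg_l with (y + r); [rewrite Rinv_r; nra | lra]. }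
  rewrite Hinv; field.
Qed.

Definition lin (a : R) (x : V4) (b : R) (y : V4) : V4 :=
  mkV4 (a * c0 x + b * c0 y) (a * c1 x + b * c1 y) (a * c2 x + b * c2 y) (a * c3 x + b * c3 y).

Lemma mink_sym x y : mink x y = mink y x.
Proof. unfold mink; ring. Qed.

Lemma mink_linl a x b y z : mink (lin a x b y) z = a * mink x z + b * mink y z.
Proof. unfold mink, lin; cbn [c0 c1 c2 c3]; ring. Qed.

Lemma mink_linr a x b y z : mink z (lin a x b y) = a * mink z x + b * mink z y.
Proof. unfold mink, lin; cbn [c0 c1 c2 c3]; ring. Qed.

Lemma mink_ext x y : (forall z, mink x z = mink y z) -> x = y.
Proof.
  destruct x as [x0 x1 x2 x3], y as [y0 y1 y2 y3]; intros H.
  pose proof (H (mkV4 1 0 0 0)); pose proof (H (mkV4 0 1 0 0));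
  pose proof (H (mkV4 0 0 1 0)); pose proof (H (mkV4 0 0 0 1)).
  unfold mink in *; cbn [c0 c1 c2 c3] in *; f_equal; lra.
Qed.

Lemma cauchy_schwarz3 x1 x2 x3 y1 y2 y3 :
  (x1 * y1 + x2 * y2 + x3 * y3) ^ 2 <= (x1 ^ 2 + x2 ^ 2 + x3 ^ 2) * (y1 ^ 2 + y2 ^ 2 + y3 ^ 2).
Proof.
  assert (Lagrange : (x1 ^ 2 + x2 ^ 2 + x3 ^ 2) * (y1 ^ 2 + y2 ^ 2 + y3 ^ 2)
    - (x1 * y1 + x2 * y2 + x3 * y3) ^ 2
    = (x1 * y2 - x2 * y1) ^ 2 + (x1 * y3 - x3 * y1) ^ 2 + (x2 * y3 - x3 * y2) ^ 2) by ring.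
  pose proof (pow2_ge_0 (x1 * y2 - x2 * y1)); pose proof (pow2_ge_0 (x1 * y3 - x3 * y1));
  pose proof (pow2_ge_0 (x2 * y3 - x3 * y2)); lra.
Qed.

Lemma mink_H3_le x y : in_H3 x -> in_H3 y -> mink x y <= -1.
Proof.
  destruct x as [x0 x1 x2 x3], y as [y0 y1 y2 y3]; unfold in_H3, mink; cbn [c0 c1 c2 c3].
  intros [Hx Hx0] [Hy Hy0].
  pose proof (cauchy_schwarz3 x1 x2 x3 y1 y2 y3) as CS.
  set (a := x1 ^ 2 + x2 ^ 2 + x3 ^ 2) in *; set (b := y1 ^ 2 + y2 ^ 2 + y3 ^ 2) in *.
  set (d := x1 * y1 + x2 * y2 + x3 * y3) in *.
  assert (Hxa : x0 ^ 2 = 1 + a) by (unfold a; lra).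
  assert (Hyb : y0 ^ 2 = 1 + b) by (unfold b; lra).
  assert (Ha : 0 <= a) by (unfold a; nra). assert (Hb : 0 <= b) by (unfold b; nra).
  assert (Hd : 2 * d <= a + b).
  { pose proof (pow2_ge_0 (x1 - y1)); pose proof (pow2_ge_0 (x2 - y2));
    pose proof (pow2_ge_0 (x3 - y3)); unfold a, b, d; nra. }
  assert (HP : (x0 * y0) ^ 2 = (1 + a) * (1 + b)) by (rewrite <- Hxa, <- Hyb; ring).
  assert (HP0 : 0 < x0 * y0) by nra.
  assert ((1 + d) ^ 2 <= (x0 * y0) ^ 2) by nra.
  assert (1 + d <= x0 * y0) by nra.
  unfold d in *; lra.
Qed.

Lemma timelike_same_sheet x y : mink x x = -1 -> in_H3 y -> mink x y < 0 -> 0 < c0 x.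
Proof.
  destruct x as [x0 x1 x2 x3], y as [y0 y1 y2 y3]; unfold in_H3, mink; cbn [c0 c1 c2 c3].
  intros Hx [Hy Hy0] Hxy.
  pose proof (cauchy_schwarz3 x1 x2 x3 y1 y2 y3) as CS.
  destruct (Rlt_or_le 0 x0) as [|Hx0]; [assumption|exfalso].
  assert (Hd : x1 * y1 + x2 * y2 + x3 * y3 < x0 * y0) by lra.
  set (d := x1 * y1 + x2 * y2 + x3 * y3) in *.
  assert (HP : (x0 * y0) ^ 2 = (1 + (x1 ^ 2 + x2 ^ 2 + x3 ^ 2)) * (1 + (y1 ^ 2 + y2 ^ 2 + y3 ^ 2))).
  { replace (1 + (x1 ^ 2 + x2 ^ 2 + x3 ^ 2)) with (x0 ^ 2) by lra.
    replace (1 + (y1 ^ 2 + y2 ^ 2 + y3 ^ 2)) with (y0 ^ 2) by lra. ring. }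
  assert (x0 * y0 <= 0) by nra.
  assert ((x0 * y0) ^ 2 < d ^ 2) by nra.
  nra.
Qed.

Lemma tangent_time_component_bound p w : mink p p = -1 -> mink p w = 0 ->
  c0 w ^ 2 * c0 p ^ 2 <= (c0 p ^ 2 - 1) * (c1 w ^ 2 + c2 w ^ 2 + c3 w ^ 2).
Proof.
  destruct p as [p0 p1 p2 p3], w as [w0 w1 w2 w3]; unfold mink; cbn [c0 c1 c2 c3].
  intros Hp Hw.
  replace (w0 ^ 2 * p0 ^ 2) with ((p1 * w1 + p2 * w2 + p3 * w3) ^ 2)
    by (replace (p1 * w1 + p2 * w2 + p3 * w3) with (p0 * w0) by lra; ring).
  replace (p0 ^ 2 - 1) with (p1 ^ 2 + p2 ^ 2 + p3 ^ 2) by lra.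
  apply cauchy_schwarz3.
Qed.

Lemma tangent_mink_nonneg p w : mink p p = -1 -> mink p w = 0 -> 0 <= mink w w.
Proof.
  intros Hp Hw; pose proof (tangent_time_component_bound p w Hp Hw).
  destruct w as [w0 w1 w2 w3]; unfold mink in *; cbn [c0 c1 c2 c3] in *.
  nra.
Qed.

Lemma tangent_isotropic p w : mink p p = -1 -> mink p w = 0 -> mink w w = 0 ->
  w = mkV4 0 0 0 0.
Proof.
  intros Hp Hw Hww; pose proof (tangent_time_component_bound p w Hp Hw).
  destruct w as [w0 w1 w2 w3]; unfold mink in *; cbn [c0 c1 c2 c3] in *.
  assert (w0 = 0) by nra.
  subst w0; f_equal; nra.
Qed.

Lemma tangent_unit_mink_bound p u w : mink p p = -1 ->
  tangent_at p u -> unit_vec u -> tangent_at p w -> unit_vec w -> -1 <= mink u w <= 1.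
Proof.
  unfold tangent_at, unit_vec; intros Hp Hpu Hu Hpw Hw.
  assert (Hsum : 0 <= mink (lin 1 u 1 w) (lin 1 u 1 w)).
  { apply (tangent_mink_nonneg p); [|rewrite mink_linr, Hpu, Hpw]; lra. }
  assert (Hdiff : 0 <= mink (lin 1 u (-1) w) (lin 1 u (-1) w)).
  { apply (tangent_mink_nonneg p); [|rewrite mink_linr, Hpu, Hpw]; lra. }
  rewrite !mink_linl, !mink_linr, Hu, Hw, (mink_sym w u) in Hsum, Hdiff.
  lra.
Qed.

Lemma geod_lin p v t : geod p v t = lin (cosh t) p (sinh t) v.
Proof. reflexivity. Qed.

Lemma geod_mink p u v s t : mink p p = -1 -> tangent_at p u -> tangent_at p v ->
  mink (geod p u s) (geod p v t) = - cosh s * cosh t + sinh s * sinh t * mink u v.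
Proof.
  unfold tangent_at; intros Hp Hpu Hpv.
  rewrite !geod_lin, mink_linl, !mink_linr, Hp, Hpv, (mink_sym u p), Hpu; ring.
Qed.

Lemma geod_in_H3 p v t : in_H3 p -> tangent_at p v -> unit_vec v -> in_H3 (geod p v t).
Proof.
  intros [Hp Hp0] Hpv Hv.
  assert (Hgg : mink (geod p v t) (geod p v t) = -1).
  { rewrite geod_mink by assumption; unfold unit_vec in Hv; rewrite Hv.
    pose proof (cosh_sq_sub_sinh_sq t); lra. }
  split; [exact Hgg|].
  apply (timelike_same_sheet _ p Hgg); [split; assumption|].
  unfold tangent_at in Hpv.
  rewrite geod_lin, mink_linl, Hp, (mink_sym v p), Hpv.
  pose proof (cosh_pos t); lra.
Qed.

Lemma hdist_geod p v t : in_H3 p -> tangent_at p v -> 0 <= t -> hdist p (geod p v t) = t.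
Proof.
  intros [Hp _] Hpv Ht; unfold hdist, tangent_at in *.
  rewrite geod_lin, mink_linr, Hp, Hpv.
  replace (- (cosh t * -1 + sinh t * 0)) with (cosh t) by ring.
  apply arcosh_cosh, Ht.
Qed.

Lemma sphere_geod p v t : in_H3 p -> tangent_at p v -> unit_vec v -> 0 <= t ->
  sphere p t (geod p v t).
Proof.
  intros Hp Hpv Hv Ht; split; [apply geod_in_H3 | apply hdist_geod]; assumption.
Qed.

Lemma geod_dir_inj p u v t : sinh t <> 0 -> geod p u t = geod p v t -> u = v.
Proof.
  intros Ht E; apply mink_ext; intros z.
  apply (f_equal (fun y => mink y z)) in E.
  rewrite !geod_lin, !mink_linl in E.
  apply Rmult_eq_reg_l with (sinh t); [lra | assumption].
Qed.

Lemma sphere_iff c r x : in_H3 c -> 0 <= r ->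
  sphere c r x <-> in_H3 x /\ - mink c x = cosh r.
Proof.
  intros Hc Hr; unfold sphere, hdist; split; intros [Hx Hd]; split; try assumption.
  - rewrite <- Hd; symmetry; apply cosh_arcosh.
    pose proof (mink_H3_le c x Hc Hx); lra.
  - rewrite Hd; apply arcosh_cosh, Hr.
Qed.

Lemma sphere_meet_center_bound a b x r :
  mink a a = -1 -> mink b b = -1 -> mink x x = -1 ->
  - mink a x = cosh r -> - mink b x = cosh r -> - mink a b <= cosh (2 * r).
Proof.
  intros Ha Hb Hx Hax Hbx.
  (* [w] is tangent at [x], and [0 <= <w,w>] is the triangle inequality through [x]. *)
  set (w := lin 1 (lin 1 a 1 b) (- 2 * cosh r) x).
  assert (Hxw : mink x w = 0).
  { unfold w; rewrite !mink_linr, (mink_sym x a), (mink_sym x b), Hx; lra. }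
  pose proof (tangent_mink_nonneg x w Hx Hxw) as Hww.
  unfold w in Hww; rewrite !mink_linl, !mink_linr in Hww.
  rewrite Ha, Hb, Hx, (mink_sym b a), (mink_sym x a), (mink_sym x b) in Hww.
  rewrite cosh_double; pose proof (cosh_sq_sub_sinh_sq r); nra.
Qed.

Lemma tangent_collinear_of_pairing_rigid p u w : mink p p = -1 ->
  tangent_at p u -> unit_vec u -> tangent_at p w ->
  (forall v, tangent_at p v -> unit_vec v -> mink w v = mink w u -> v = u) ->
  exists la, la <> 0 /\ forall z, mink w z = la * mink u z.
Proof.
  unfold tangent_at, unit_vec; intros Hp Hpu Hu Hpw Hrigid.
  set (N := mink w w); set (be := mink w u).
  (* [lin k w (-1) u] reflects [u] in the line of [w]; when [be = 0] it is [-u],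
     also for [w = 0] since Rocq's [x / 0] is [0]. *)
  set (k := 2 * be / N).
  assert (HkN : k * N = 2 * be).
  { destruct (Req_dec N 0) as [HN | HN].
    - assert (Hw0 : w = mkV4 0 0 0 0) by (apply (tangent_isotropic p); assumption).
      assert (Hbe : be = 0) by (unfold be; rewrite Hw0; unfold mink; cbn [c0 c1 c2 c3]; ring).
      rewrite HN, Hbe; ring.
    - unfold k; field; exact HN. }
  set (v := lin k w (-1) u).
  assert (Hv : v = u).
  { apply Hrigid; unfold v; rewrite ?mink_linl, !mink_linr.
    - rewrite Hpw, Hpu; ring.
    - rewrite (mink_sym u w); fold N be; rewrite Hu; nra.
    - fold N be; lra. }
  assert (Hkz : forall z, k * mink w z = 2 * mink u z).
  { intros z; assert (E : mink v z = mink u z) by (rewrite Hv; reflexivity).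
    unfold v in E; rewrite mink_linl in E; lra. }
  assert (Hk : k <> 0).
  { intros Hk0; pose proof (Hkz u) as Hku; rewrite Hk0, Hu in Hku; lra. }
  exists (2 / k); split.
  - apply Rmult_integral_contrapositive_currified; [lra | apply Rinv_neq_0_compat, Hk].
  - intros z; apply Rmult_eq_reg_l with k; [rewrite Hkz; field | ]; exact Hk.
Qed.

Lemma tangency_coefficients C S al la : C ^ 2 - S ^ 2 = 1 -> 0 < C -> la <> 0 ->
  al ^ 2 - la ^ 2 = 1 -> al * C - la * S = C -> la = 2 * S * C /\ al = C ^ 2 + S ^ 2.
Proof.
  intros Hhyp HC Hla Hnorm Htang.
  assert (Hal : al * C = C + la * S) by lra.
  assert (Hsq : C ^ 2 * (1 + la ^ 2) = (C + la * S) ^ 2)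
    by (rewrite <- Hal; replace (1 + la ^ 2) with (al ^ 2) by lra; ring).
  assert (Hla2 : la * (la - 2 * S * C) = 0).
  { replace (la * (la - 2 * S * C))
      with (C ^ 2 * (1 + la ^ 2) - (C + la * S) ^ 2 + la ^ 2 * (1 - (C ^ 2 - S ^ 2))) by ring.
    rewrite Hsq, Hhyp; ring. }
  destruct (Rmult_integral _ _ Hla2) as [|Hla3]; [contradiction|].
  split; [lra|].
  apply Rmult_eq_reg_r with C; [nra | lra].
Qed.

Lemma tangent_sphere_center q p u c : 0 < q -> in_H3 p -> tangent_at p u -> unit_vec u ->
  in_H3 c -> (forall x, sphere p q x /\ sphere c q x <-> x = geod p u q) ->
  c = geod p u (2 * q).
Proof.
  intros Hq Hp Hpu Hu Hc Htouch.
  pose proof (proj1 Hp) as Hpp.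
  set (al := - mink c p); set (w := lin 1 c (mink c p) p).
  assert (Hpw : tangent_at p w).
  { unfold tangent_at, w; rewrite mink_linr, (mink_sym p c), Hpp. ring. }
  assert (Hcz : forall z, mink c z = al * mink p z + mink w z).
  { intros z; unfold al, w; rewrite mink_linl; ring. }
  assert (Hcgeod : forall v, tangent_at p v ->
            - mink c (geod p v q) = al * cosh q - sinh q * mink w v).
  { intros v Hpv; unfold tangent_at in Hpv.
    rewrite Hcz, geod_lin, !mink_linr, Hpp, Hpv, (mink_sym w p), Hpw; ring. }
  assert (HcP : - mink c (geod p u q) = cosh q).
  { destruct (proj2 (Htouch (geod p u q)) eq_refl) as [_ Hsph].
    apply sphere_iff in Hsph; [apply Hsph | exact Hc | lra]. }
  destruct (tangent_collinear_of_pairing_rigid p u w Hpp Hpu Hu Hpw) as [la [Hla Hwz]].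
  { (* [geod p v q] is then a common point of the two spheres. *)
    intros v Hpv Hv Hwv.
    apply (geod_dir_inj p v u q); [pose proof (sinh_pos q Hq); lra|].
    apply Htouch; split; [apply sphere_geod; auto; lra|].
    apply sphere_iff; [exact Hc | lra |].
    split; [apply geod_in_H3; assumption|].
    rewrite Hcgeod, Hwv, <- Hcgeod by assumption; exact HcP. }
  assert (Hcu : mink c u = la).
  { rewrite Hcz, Hwz, Hpu; unfold unit_vec in Hu; rewrite Hu; ring. }
  assert (Hnorm : al ^ 2 - la ^ 2 = 1).
  { pose proof (proj1 Hc) as Hcc.
    rewrite Hcz, Hwz, (mink_sym p c), (mink_sym u c), Hcu in Hcc.
    replace (mink c p) with (- al) in Hcc by (unfold al; ring); nra. }
  assert (Htang : al * cosh q - la * sinh q = cosh q).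
  { pose proof (Hcgeod u Hpu) as E; rewrite HcP, Hwz in E.
    unfold unit_vec in Hu; rewrite Hu in E; lra. }
  assert (Hcoef : la = sinh (2 * q) /\ al = cosh (2 * q)).
  { rewrite sinh_double, cosh_double.
    apply tangency_coefficients; auto using cosh_sq_sub_sinh_sq, cosh_pos. }
  apply mink_ext; intros z.
  rewrite Hcz, Hwz, geod_lin, mink_linl; destruct Hcoef as [-> ->]; reflexivity.
Qed.

Lemma acos_gt_double_asin m s : -1 <= m <= 1 -> 0 <= s <= 1 ->
  acos m > 2 * asin s -> m < 1 - 2 * s ^ 2.
Proof.
  intros Hm Hs Hgt.
  pose proof (asin_bound s); pose proof (acos_bound m); pose proof PI_RGT_0.
  assert (Hsin : sin (asin s) = s) by (apply sin_asin; lra).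
  assert (Hasin : 0 <= asin s).
  { destruct (Rle_or_lt 0 (asin s)) as [|Hneg]; [assumption|].
    pose proof (sin_lt_0_var (asin s)); lra. }
  assert (Hcos : cos (acos m) < cos (2 * asin s)) by (apply cos_decreasing_1; lra).
  rewrite cos_acos, cos_2a_sin, Hsin in Hcos by assumption; lra.
Qed.

Lemma angle_unit u w : unit_vec u -> unit_vec w -> angle u w = acos (mink u w).
Proof.
  unfold angle, unit_vec; intros Hu Hw; rewrite Hu, Hw, sqrt_1.
  f_equal; field.
Qed.

Lemma mink_geod_double_lt q p u w : 0 < q -> mink p p = -1 ->
  tangent_at p u -> unit_vec u -> tangent_at p w -> unit_vec w ->
  angle u w > 2 * asin (1 / (2 * cosh q)) ->
  mink (geod p u (2 * q)) (geod p w (2 * q)) < - cosh (2 * q).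
Proof.
  intros Hq Hp Hpu Hu Hpw Hw Hang.
  pose proof (cosh_ge_1 q) as HC; pose proof (sinh_pos q Hq) as HS.
  pose proof (cosh_sq_sub_sinh_sq q) as Hhyp.
  rewrite angle_unit in Hang by assumption.
  apply acos_gt_double_asin in Hang; [| apply (tangent_unit_mink_bound p); assumption |].
  2: { assert (Hinv : 2 * cosh q * / (2 * cosh q) = 1) by (field; lra).
       pose proof (Rinv_0_lt_compat (2 * cosh q)); unfold Rdiv; split; nra. }
  rewrite geod_mink, cosh_double, sinh_double by assumption.
  set (C := cosh q) in *; set (S := sinh q) in *; set (m := mink u w) in *.
  assert (Hm : 2 * C ^ 2 * m < 2 * C ^ 2 - 1).
  { replace (1 - 2 * (1 / (2 * C)) ^ 2) with (1 - / (2 * C ^ 2)) in Hang by (field; lra).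
    assert (Hinv : 2 * C ^ 2 * / (2 * C ^ 2) = 1) by (field; lra).
    nra. }
  assert (0 < 2 * S ^ 2 * (2 * C ^ 2 - 1 - 2 * C ^ 2 * m))
    by (apply Rmult_lt_0_compat; nra).
  replace (2 * C ^ 2) with (C ^ 2 + S ^ 2 + 1) in * by lra.
  nra.
Qed.

Theorem lemma9 (q : R) (p : V4) (n : nat) (u : nat -> V4)
  (pt : nat -> V4) (c : nat -> V4) :
  0 < q -> in_H3 p -> (2 <= n)%nat ->
  (forall i, (i < n)%nat -> tangent_at p (u i) /\ unit_vec (u i)) ->
  (* p_i is the intersection point of S with the ray geod(p,u_i)(R_+) *)
  (forall i, (i < n)%nat ->
     sphere p q (pt i) /\ exists t, 0 <= t /\ pt i = geod p (u i) t) ->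
  (* S_i = sphere of radius q centred at c i, with S ∩ S_i = {p_i} *)
  (forall i, (i < n)%nat ->
     in_H3 (c i) /\
     (forall x, (sphere p q x /\ sphere (c i) q x) <-> x = pt i)) ->
  (forall i j, (i < n)%nat -> (j < n)%nat -> i <> j ->
     angle (u i) (u j) > 2 * asin (1 / (2 * cosh q))) ->
  forall i j, (i < n)%nat -> (j < n)%nat -> i <> j ->
    forall x, ~ (sphere (c i) q x /\ sphere (c j) q x).
Proof.
  intros Hq Hp _ Hu Hpt Hc Hangle i j Hi Hj Hij x [Hxi Hxj].
  assert (Hcenter : forall k, (k < n)%nat -> c k = geod p (u k) (2 * q)).
  { intros k Hk; destruct (Hu k Hk) as [Hpu Hunit], (Hc k Hk) as [Hck Htouch].
    destruct (Hpt k Hk) as [[_ Hdist] [t [Ht Hptk]]].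
    rewrite Hptk, hdist_geod in Hdist by assumption; subst t.
    apply tangent_sphere_center; try assumption.
    intros y; rewrite <- Hptk; apply Htouch. }
  destruct (Hu i Hi) as [Hpui Hui], (Hu j Hj) as [Hpuj Huj].
  destruct (Hc i Hi) as [Hci _], (Hc j Hj) as [Hcj _].
  apply sphere_iff in Hxi as [[Hxx _] Hxi]; [| exact Hci | lra].
  apply sphere_iff in Hxj as [_ Hxj]; [| exact Hcj | lra].
  pose proof (sphere_meet_center_bound _ _ _ _ (proj1 Hci) (proj1 Hcj) Hxx Hxi Hxj) as Hnear.
  pose proof (mink_geod_double_lt q p _ _ Hq (proj1 Hp) Hpui Hui Hpuj Huj
                (Hangle i j Hi Hj Hij)) as Hfar.
  rewrite <- (Hcenter i Hi), <- (Hcenter j Hj) in Hfar.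
  lra.
Qed.
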